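(* Let $P$ be a closed process of the Value-Passing Quality Calculus in which variables and names are bound exactly once, and let $l$ be a label. For any input variable $x$ in $P$, there exists exactly one formula $\varphi \Rightarrow \bar{x}$ in the translation $P^l_{\Rightarrow}$, and $\bar{x}$ does not occur in $\varphi$.
   Context: Syntax: $P ::= \mathsf{0} \mid (\nu c)P \mid P_1 \mid P_2 \mid {^l}b.P \mid {^l}\bar{c}\langle t\rangle.P \mid\ !P \mid {^l}\mathsf{case}\ x\ \mathsf{of}\ \mathsf{some}(y): P_1\ \mathsf{else}\ P_2$; binders $b ::= c?x \mid \&_q(b_1,\dots,b_n)$ where $q$ is a quality guard, a Boolean predicate $[\![q]\!]$ (e.g. $[\![\forall]\!]$ = conjunction, $[\![\exists]\!]$ = disjunction); terms $t ::= c \mid y$. Input variables $x$ are bound by binders $c?x$; labels are unique. Translation: $T(\mathsf{0},\varphi)=\emptyset$; $T(!P,\varphi)=T(P,\varphi)$; $T(P_1\mid P_2,\varphi)=T(P_1,\varphi)\cup T(P_2,\varphi)$; $T((\nu c)P,\varphi)=T(P,\varphi)$; $T({^l}b.P,\varphi)=T(P,\varphi\wedge \mathsf{hp}(b))\cup\mathsf{th}(\varphi,b)\cup\{\varphi\leadsto\bar{l}\}$; $T({^l}\bar{c}\langle t\rangle.P,\varphi)=T(P,\varphi)\cup\{\varphi\leadsto\bar{c}\}\cup\{\varphi\leadsto\bar{l}\}$; $T({^l}\mathsf{case}\ x\ \mathsf{of}\ \mathsf{some}(y):P_1\ \mathsf{else}\ P_2,\varphi)=T(P_1,\varphi\wedge\bar{x})\cup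 T(P_2,\varphi\wedge\neg\bar{x})\cup\{\varphi\leadsto\bar{l}\}$; with $\mathsf{hp}(c?x)=\bar{c}$, $\mathsf{th}(\varphi,c?x)=\{(\varphi\wedge\bar{c})\leadsto\bar{x}\}$, $\mathsf{hp}(\&_q(b_1,\dots,b_n))=[\![q]\!](\mathsf{hp}(b_1),\dots,\mathsf{hp}(b_n))$, $\mathsf{th}(\varphi,\&_q(b_1,\dots,b_n))=\bigcup_i\mathsf{th}(\varphi,b_i)$. Here $\bar{c},\bar{x},\bar{l}$ are propositional literals for channels, input variables and labels. The set $T(P,\mathsf{tt})$ is normalised by replacing any two constraints $\varphi\leadsto\bar{p}$, $\varphi'\leadsto\bar{p}$ with the same consequent by $(\varphi\vee\varphi')\leadsto\bar{p}$. $P^l_{\Rightarrow}$ is the resulting normalised set with each $\leadsto$ read as propositional implication $\Rightarrow$. *)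

From Stdlib Require Import List Arith.
Import ListNotations.

(* Identifiers: channel names, input variables (bound by c?x),
   data variables (bound by case ... some(y)), labels. *)
Definition name := nat.
Definition ivar := nat.
Definition dvar := nat.
Definition label := nat.

Inductive form (A : Type) : Type :=
| FTT : form A
| FFF : form A
| FAt : A -> form A
| FNot : form A -> form A
| FAnd : form A -> form A -> form A
| FOr : form A -> form A -> form A.
Arguments FTT {A}. Arguments FFF {A}. Arguments FAt {A} _.
Arguments FNot {A} _. Arguments FAnd {A} _ _. Arguments FOr {A} _ _.

Fixpoint fsubst {A B : Type} (f : form A) (s : A -> form B) : form B :=
  match f with
  | FTT => FTT
  | FFF => FFF
  | FAt a => s a
  | FNot g => FNot (fsubst g s)
  | FAnd g h => FAnd (fsubst g s) (fsubst h s)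
  | FOr g h => FOr (fsubst g s) (fsubst h s)
  end.

Fixpoint atoms {A : Type} (f : form A) : list A :=
  match f with
  | FTT | FFF => []
  | FAt a => [a]
  | FNot g => atoms g
  | FAnd g h | FOr g h => atoms g ++ atoms h
  end.

(* A quality guard q is a Boolean predicate [[q]], given as a propositional
   formula whose atoms are argument positions 0,1,...,n-1. *)
Definition qguard := form nat.
Definition qapp {A : Type} (q : qguard) (phis : list (form A)) : form A :=
  fsubst q (fun i => nth i phis FFF).

Definition q_forall (n : nat) : qguard :=
  fold_right (fun i f => FAnd (FAt i) f) FTT (seq 0 n).
Definition q_exists (n : nat) : qguard :=
  fold_right (fun i f => FOr (FAt i) f) FFF (seq 0 n).

Inductive atom : Type :=
| AChan : name -> atom
| AVar : ivar -> atom
| ALab : label -> atom.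

Definition atom_eq_dec : forall a b : atom, {a = b} + {a <> b}.
Proof. decide equality; apply Nat.eq_dec. Defined.

Definition pform := form atom.

Inductive term : Type :=
| TName : name -> term
| TVar : dvar -> term.

Inductive binder : Type :=
| BIn : name -> ivar -> binder
| BQ : qguard -> binders -> binder
with binders : Type :=
| BNil : binders
| BCons : binder -> binders -> binders.

Inductive proc : Type :=
| PNil : proc
| PNew : name -> proc -> proc
| PPar : proc -> proc -> proc
| PIn : label -> binder -> proc -> proc
| POut : label -> name -> term -> proc -> proc
| PBang : proc -> proc
| PCase : label -> ivar -> dvar -> proc -> proc -> proc.
  (* ^l case x of some(y): P1 else P2 *)

Fixpoint bvars (b : binder) : list ivar :=
  match b with
  | BIn _ x => [x]
  | BQ _ bs => bsvars bs
  end
with bsvars (bs : binders) : list ivar :=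
  match bs with
  | BNil => []
  | BCons b bs' => bvars b ++ bsvars bs'
  end.

Fixpoint input_vars (P : proc) : list ivar :=
  match P with
  | PNil => []
  | PNew _ P => input_vars P
  | PPar P1 P2 => input_vars P1 ++ input_vars P2
  | PIn _ b P => bvars b ++ input_vars P
  | POut _ _ _ P => input_vars P
  | PBang P => input_vars P
  | PCase _ _ _ P1 P2 => input_vars P1 ++ input_vars P2
  end.

Fixpoint data_vars (P : proc) : list dvar :=
  match P with
  | PNil => []
  | PNew _ P => data_vars P
  | PPar P1 P2 => data_vars P1 ++ data_vars P2
  | PIn _ _ P => data_vars P
  | POut _ _ _ P => data_vars P
  | PBang P => data_vars P
  | PCase _ _ y P1 P2 => y :: data_vars P1 ++ data_vars P2
  end.

Fixpoint bound_names (P : proc) : list name :=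
  match P with
  | PNil => []
  | PNew c P => c :: bound_names P
  | PPar P1 P2 => bound_names P1 ++ bound_names P2
  | PIn _ _ P => bound_names P
  | POut _ _ _ P => bound_names P
  | PBang P => bound_names P
  | PCase _ _ _ P1 P2 => bound_names P1 ++ bound_names P2
  end.

Fixpoint labels (P : proc) : list label :=
  match P with
  | PNil => []
  | PNew _ P => labels P
  | PPar P1 P2 => labels P1 ++ labels P2
  | PIn l _ P => l :: labels P
  | POut l _ _ P => l :: labels P
  | PBang P => labels P
  | PCase l _ _ P1 P2 => l :: labels P1 ++ labels P2
  end.

Fixpoint free_ivars (P : proc) : list ivar :=
  match P with
  | PNil => []
  | PNew _ P => free_ivars P
  | PPar P1 P2 => free_ivars P1 ++ free_ivars P2
  | PIn _ b P => filter (fun z => negb (existsb (Nat.eqb z) (bvars b))) (free_ivars P)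
  | POut _ _ _ P => free_ivars P
  | PBang P => free_ivars P
  | PCase _ x _ P1 P2 => x :: free_ivars P1 ++ free_ivars P2
  end.

Fixpoint free_dvars (P : proc) : list dvar :=
  match P with
  | PNil => []
  | PNew _ P => free_dvars P
  | PPar P1 P2 => free_dvars P1 ++ free_dvars P2
  | PIn _ _ P => free_dvars P
  | POut _ _ t P =>
      match t with TVar y => y :: free_dvars P | TName _ => free_dvars P end
  | PBang P => free_dvars P
  | PCase _ _ y P1 P2 =>
      filter (fun z => negb (Nat.eqb z y)) (free_dvars P1) ++ free_dvars P2
  end.

Definition closed (P : proc) : Prop := free_ivars P = [] /\ free_dvars P = [].

Definition bound_once (P : proc) : Prop :=
  NoDup (input_vars P) /\ NoDup (data_vars P) /\ NoDup (bound_names P).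

Definition labels_unique (P : proc) : Prop := NoDup (labels P).

Definition constr := (pform * atom)%type.

Fixpoint hp (b : binder) : pform :=
  match b with
  | BIn c _ => FAt (AChan c)
  | BQ q bs => qapp q (hps bs)
  end
with hps (bs : binders) : list pform :=
  match bs with
  | BNil => []
  | BCons b bs' => hp b :: hps bs'
  end.

Fixpoint th (phi : pform) (b : binder) : list constr :=
  match b with
  | BIn c x => [(FAnd phi (FAt (AChan c)), AVar x)]
  | BQ _ bs => ths phi bs
  end
with ths (phi : pform) (bs : binders) : list constr :=
  match bs with
  | BNil => []
  | BCons b bs' => th phi b ++ ths phi bs'
  end.

Fixpoint T (P : proc) (phi : pform) : list constr :=
  match P with
  | PNil => []
  | PBang P => T P phi
  | PPar P1 P2 => T P1 phi ++ T P2 phi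
  | PNew _ P => T P phi
  | PIn l b P => T P (FAnd phi (hp b)) ++ th phi b ++ [(phi, ALab l)]
  | POut l c _ P => T P phi ++ [(phi, AChan c)] ++ [(phi, ALab l)]
  | PCase l x _ P1 P2 =>
      T P1 (FAnd phi (FAt (AVar x))) ++ T P2 (FAnd phi (FNot (FAt (AVar x))))
        ++ [(phi, ALab l)]
  end.

Definition disj (l : list pform) : pform :=
  match l with
  | [] => FFF
  | f :: r => fold_left FOr r f
  end.

Definition normalise (cs : list constr) : list constr :=
  map (fun p => (disj (map fst (filter (fun c => if atom_eq_dec (snd c) p then true else false) cs)), p))
      (nodup atom_eq_dec (map snd cs)).

(* P^l_=> : the normalised set T(P, tt), each ~> read as implication
   (a pair (phi, p) stands for phi => p).  The label l plays no role in the
   definition given in the paper's context. *)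
Definition Pimp (P : proc) (l : label) : list constr := normalise (T P FTT).

(* Contexts are extended only by the formulas hp(b), whose atoms are channels,
   and by x-bar or its negation at [case x].  The constraints with consequent
   x-bar come from the binder c?x, as (phi /\ c-bar) ~> x-bar with phi the
   context there; in a process binding x only once, a [case x] that could have
   put x-bar into phi would have to lie outside the scope of c?x, i.e. x would
   be free, which closedness excludes.  Normalisation merges these antecedents
   into one disjunction, whose atoms are those of the merged antecedents. *)

From Stdlib Require Import List PeanoNat.

Scheme binder_mut := Induction for binder Sort Prop
with binders_mut := Induction for binders Sort Prop.

Lemma NoDup_app_disjoint {A} (l1 l2 : list A) a :
  NoDup (l1 ++ l2) -> In a l1 -> ~ In a l2.
Proof.
  induction l1 as [|b l1 IH]; simpl; intros Hnd Ha; [contradiction|].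
  inversion Hnd as [|? ? Hb Hnd']; subst.
  destruct Ha as [<-|Ha]; [|auto].
  intros H2; apply Hb, in_or_app; auto.
Qed.

Lemma atoms_fsubst {A B} (f : form A) (s : A -> form B) a :
  In a (atoms (fsubst f s)) -> exists i, In a (atoms (s i)).
Proof.
  induction f; simpl; rewrite ?in_app_iff; intuition eauto.
Qed.

Lemma atoms_fold_left_FOr (r : list pform) (f : pform) a :
  In a (atoms (fold_left FOr r f)) -> In a (atoms f) \/ exists g, In g r /\ In a (atoms g).
Proof.
  revert f; induction r as [|g r IH]; simpl; intros f Ha; auto.
  destruct (IH _ Ha) as [Hfg|[h [Hh Hah]]]; [|eauto].
  simpl in Hfg; apply in_app_or in Hfg as [Hf|Hg]; eauto.
Qed.

Lemma atoms_disj (fs : list pform) a :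
  In a (atoms (disj fs)) -> exists g, In g fs /\ In a (atoms g).
Proof.
  destruct fs as [|f r]; simpl; [contradiction|].
  intros Ha; destruct (atoms_fold_left_FOr _ _ _ Ha) as [Hf|[g [Hg Hag]]];
    [exists f|exists g]; simpl; auto.
Qed.

Lemma normalise_functional (cs : list constr) p phi phi' :
  In (phi, p) (normalise cs) -> In (phi', p) (normalise cs) -> phi = phi'.
Proof.
  unfold normalise; rewrite !in_map_iff.
  intros [q [Eq _]] [q' [Eq' _]].
  injection Eq as <- <-; injection Eq' as <- ->; reflexivity.
Qed.

Lemma normalise_complete (cs : list constr) p psi :
  In (psi, p) cs ->
  exists phi, In (phi, p) (normalise cs) /\
    forall a, In a (atoms phi) -> exists psi', In (psi', p) cs /\ In a (atoms psi').
Proof.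
  intros Hpsi; eexists; split.
  - apply in_map_iff; exists p; split; [reflexivity|].
    apply nodup_In, in_map_iff; exists (psi, p); auto.
  - intros a Ha; apply atoms_disj in Ha as [g [Hg Hag]].
    apply in_map_iff in Hg as [[g' q] [<- Hq]].
    apply filter_In in Hq as [Hq Eq]; simpl in Eq.
    destruct (atom_eq_dec q p) as [->|]; [eauto|discriminate].
Qed.

Lemma hp_atoms_chan b a : In a (atoms (hp b)) -> exists c, a = AChan c.
Proof.
  revert a.
  apply (binder_mut (fun b => forall a, In a (atoms (hp b)) -> exists c, a = AChan c)
                    (fun bs => forall i a, In a (atoms (nth i (hps bs) FFF)) ->
                                 exists c, a = AChan c)).
  - intros c x a [<-|[]]; eauto.
  - intros q bs IH a Ha; apply atoms_fsubst in Ha as [i Hi]; eauto.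
  - intros [|i] a [].
  - intros b' IHb bs IHbs [|i] a Ha; simpl in Ha; eauto.
Qed.

Lemma In_th phi b psi p :
  In (psi, p) (th phi b) ->
  exists c x, psi = FAnd phi (FAt (AChan c)) /\ p = AVar x /\ In x (bvars b).
Proof.
  revert psi p.
  apply (binder_mut
    (fun b => forall psi p, In (psi, p) (th phi b) ->
       exists c x, psi = FAnd phi (FAt (AChan c)) /\ p = AVar x /\ In x (bvars b))
    (fun bs => forall psi p, In (psi, p) (ths phi bs) ->
       exists c x, psi = FAnd phi (FAt (AChan c)) /\ p = AVar x /\ In x (bsvars bs))).
  - intros c x psi p [E|[]]; injection E as <- <-; simpl; eauto 7.
  - auto.
  - intros psi p [].
  - intros b' IHb bs IHbs psi p Hin; simpl in Hin; apply in_app_or in Hin as [Hin|Hin];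
      [destruct (IHb _ _ Hin) as (c & x & ? & ? & ?)
      |destruct (IHbs _ _ Hin) as (c & x & ? & ? & ?)];
      exists c, x; simpl; rewrite in_app_iff; auto.
Qed.

Lemma th_complete phi b x : In x (bvars b) -> exists psi, In (psi, AVar x) (th phi b).
Proof.
  revert x.
  apply (binder_mut (fun b => forall x, In x (bvars b) -> exists psi, In (psi, AVar x) (th phi b))
    (fun bs => forall x, In x (bsvars bs) -> exists psi, In (psi, AVar x) (ths phi bs))).
  - intros c x y [<-|[]]; simpl; eauto.
  - auto.
  - intros x [].
  - intros b' IHb bs IHbs x Hx; simpl in Hx |- *; apply in_app_or in Hx as [Hx|Hx];
      [destruct (IHb _ Hx) as [psi Hpsi]|destruct (IHbs _ Hx) as [psi Hpsi]];
      exists psi; rewrite in_app_iff; auto.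
Qed.

Lemma T_var_input P phi psi x :
  In (psi, AVar x) (T P phi) -> In x (input_vars P).
Proof.
  revert phi; induction P; simpl; intros phi Hin; try contradiction; eauto;
    rewrite ?in_app_iff in Hin; rewrite ?in_app_iff.
  - destruct Hin; eauto.
  - destruct Hin as [Hin|[Hin|[E|[]]]]; [eauto| |discriminate].
    destruct (In_th _ _ _ _ Hin) as (c & y & _ & [= ->] & Hy); auto.
  - destruct Hin as [|[E|[E|[]]]]; [eauto|discriminate..].
  - destruct Hin as [Hin|[Hin|[E|[]]]]; [eauto|eauto|discriminate].
Qed.

Lemma T_var_complete P phi x :
  In x (input_vars P) -> exists psi, In (psi, AVar x) (T P phi).
Proof.
  revert phi; induction P; simpl; intros phi Hx; try contradiction; eauto.
  - apply in_app_or in Hx as [Hx|Hx];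
      [destruct (IHP1 phi Hx) as [psi ?]|destruct (IHP2 phi Hx) as [psi ?]];
      exists psi; apply in_or_app; auto.
  - apply in_app_or in Hx as [Hx|Hx];
      [destruct (th_complete phi b x Hx) as [psi ?]
      |destruct (IHP (FAnd phi (hp b)) Hx) as [psi ?]];
      exists psi; rewrite !in_app_iff; auto.
  - destruct (IHP phi Hx) as [psi ?]; exists psi; apply in_or_app; auto.
  - apply in_app_or in Hx as [Hx|Hx];
      [destruct (IHP1 (FAnd phi (FAt (AVar i))) Hx) as [psi ?]
      |destruct (IHP2 (FAnd phi (FNot (FAt (AVar i)))) Hx) as [psi ?]];
      exists psi; rewrite !in_app_iff; auto.
Qed.

(* The binder case is where single binding matters: a constraint for x coming
   from the continuation cannot have x bound by the binder itself. *)
Lemma T_var_antecedent_self P phi psi x :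
  NoDup (input_vars P) -> In (psi, AVar x) (T P phi) -> In (AVar x) (atoms psi) ->
  In (AVar x) (atoms phi) \/ In x (free_ivars P).
Proof.
  revert phi; induction P as [| |P1 IH1 P2 IH2|l b P IH|l c t P IH|P IH|l y z P1 IH1 P2 IH2];
    simpl; intros phi Hnd Hin Hx; try contradiction; eauto.
  - rewrite in_app_iff in Hin |- *.
    destruct Hin as [Hin|Hin];
      [destruct (IH1 _ (NoDup_app_remove_r _ _ Hnd) Hin Hx)
      |destruct (IH2 _ (NoDup_app_remove_l _ _ Hnd) Hin Hx)]; auto.
  - apply in_app_or in Hin as [Hin|Hin].
    + destruct (IH _ (NoDup_app_remove_l _ _ Hnd) Hin Hx) as [Hphi|Hfree].
      * simpl in Hphi; apply in_app_or in Hphi as [Hphi|Hhp]; auto.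
        destruct (hp_atoms_chan _ _ Hhp); discriminate.
      * right; apply filter_In; split; auto.
        destruct (existsb (Nat.eqb x) (bvars b)) eqn:E; [exfalso|reflexivity].
        apply existsb_exists in E as [x' [Hx' E]]; apply Nat.eqb_eq in E as <-.
        exact (NoDup_app_disjoint _ _ _ Hnd Hx' (T_var_input _ _ _ _ Hin)).
    + apply in_app_or in Hin as [Hin|[E|[]]]; [|discriminate].
      destruct (In_th _ _ _ _ Hin) as (c & x' & -> & _ & _).
      simpl in Hx; rewrite in_app_iff in Hx; destruct Hx as [|[E|[]]]; [auto|discriminate].
  - rewrite in_app_iff in Hin; destruct Hin as [|[E|[E|[]]]]; [eauto|discriminate..].
  - pose proof (NoDup_app_remove_r _ _ Hnd) as Hnd1.
    pose proof (NoDup_app_remove_l _ _ Hnd) as Hnd2.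
    rewrite ?in_app_iff in Hin; rewrite ?in_app_iff.
    destruct Hin as [Hin|[Hin|[E|[]]]]; [| |discriminate];
      [destruct (IH1 _ Hnd1 Hin Hx) as [Hphi|]|destruct (IH2 _ Hnd2 Hin Hx) as [Hphi|]];
      auto; simpl in Hphi; rewrite in_app_iff in Hphi;
      destruct Hphi as [|[[= ->]|[]]]; auto.
Qed.

Theorem lemmaB1 (P : proc) (l : label) :
  closed P -> bound_once P -> labels_unique P ->
  forall x : ivar, In x (input_vars P) ->
    (exists phi : pform, In (phi, AVar x) (Pimp P l) /\ ~ In (AVar x) (atoms phi)) /\
    (forall phi phi' : pform,
        In (phi, AVar x) (Pimp P l) -> In (phi', AVar x) (Pimp P l) -> phi = phi').
Proof.
  intros [Hclosed _] [Hnd _] _ x Hx.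
  split; [|apply normalise_functional].
  destruct (T_var_complete P FTT x Hx) as [psi Hpsi].
  destruct (normalise_complete _ _ _ Hpsi) as [phi [Hphi Hatoms]].
  exists phi; split; [exact Hphi|].
  intros Hself; destruct (Hatoms _ Hself) as [psi' [Hpsi' Hself']].
  destruct (T_var_antecedent_self P FTT psi' x Hnd Hpsi' Hself') as [[]|Hfree].
  rewrite Hclosed in Hfree; contradiction.
Qed.
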